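(* Let $l\ge2$ and $r\ge3$ be integers and let $\kappa$ be a real number with $3-l(1-\kappa)>0$. Let $n_2,\dots,n_l\ge0$ and $m_2,\dots,m_r\ge0$ be real numbers satisfying $$\sum_{s=2}^l s\,n_s=\sum_{t=2}^r t\,m_t\qquad\text{and}\qquad \sum_{t=2}^{r-1}m_t+\sum_{s=2}^l(l-s)n_s\ \ge\ \kappa l\sum_{s=2}^l n_s .$$ Then $$\sum_{t=2}^{r-1}(r-t)\,m_t\ \ge\ \Bigl(r-\frac{2+r}{3-l(1-\kappa)}\Bigr)\Bigl(\sum_{s=2}^l n_s+\sum_{t=2}^r m_t\Bigr).$$ *)

From Stdlib Require Import Reals Lra Lia List.
Open Scope R_scope.

(* sumR a b f = sum_{i=a}^{b} f i  (empty, i.e. 0, when b < a) *)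
Definition sumR (a b : nat) (f : nat -> R) : R :=
  fold_right Rplus 0 (map f (seq a (S b - a))).

(* Write N = Σ_s n_s, W = Σ_s s n_s, M = Σ_{t<r} m_t, P = Σ_{t<r} t m_t and
   D = 3 - l(1-κ) > 0.  The hypotheses say W = P + r m_r (degree balance) and
   M ≥ W - (3-D) N (the κ-constraint, since l(1-κ) = 3 - D); moreover every
   index is at least 2, so W ≥ 2N and P ≥ 2M.  Since
   Σ_{t<r} (r-t) m_t = rM - P, the claim is equivalent, after multiplying by
   D > 0, to the single linear inequality
        (2+r)(N + M + m_r) ≥ D (W + rN),
   which is a nonnegative combination of the facts above (the combination
   depends on the sign of 2+r-D). *)
From Stdlib Require Import Reals Lra Lia List Psatz.
Open Scope R_scope.

Lemma in_sumR_range (a b i : nat) : In i (seq a (S b - a)) -> (a <= i <= b)%nat.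
Proof. rewrite in_seq. lia. Qed.

Lemma list_sum_le (f g : nat -> R) (xs : list nat) :
  (forall i, In i xs -> f i <= g i) ->
  fold_right Rplus 0 (map f xs) <= fold_right Rplus 0 (map g xs).
Proof.
  induction xs as [|x xs IH]; simpl; intros Hfg; [lra|].
  apply Rplus_le_compat; auto.
Qed.

Lemma list_sum_lin (f g : nat -> R) (x y : R) (xs : list nat) :
  fold_right Rplus 0 (map (fun i => x * f i + y * g i) xs) =
  x * fold_right Rplus 0 (map f xs) + y * fold_right Rplus 0 (map g xs).
Proof. induction xs as [|z xs IH]; simpl; [ring|]. rewrite IH. ring. Qed.

Lemma sumR_le (a b : nat) (f g : nat -> R) :
  (forall i, (a <= i <= b)%nat -> f i <= g i) -> sumR a b f <= sumR a b g.
Proof.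
  intros Hfg; apply list_sum_le; intros i Hi; apply Hfg, (in_sumR_range a b), Hi.
Qed.

Lemma sumR_ext (a b : nat) (f g : nat -> R) :
  (forall i, (a <= i <= b)%nat -> f i = g i) -> sumR a b f = sumR a b g.
Proof.
  intros Hfg; apply Rle_antisym; apply sumR_le; intros i Hi;
    rewrite (Hfg i Hi); apply Rle_refl.
Qed.

Lemma sumR_lin (a b : nat) (f g : nat -> R) (x y : R) :
  sumR a b (fun i => x * f i + y * g i) = x * sumR a b f + y * sumR a b g.
Proof. apply list_sum_lin. Qed.

Lemma sumR_last (a b : nat) (f : nat -> R) :
  (a <= S b)%nat -> sumR a (S b) f = sumR a b f + f (S b).
Proof.
  intros Hab; unfold sumR.
  replace (S (S b) - a)%nat with (S (S b - a)) by lia.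
  rewrite seq_S, map_app, fold_right_app.
  replace (a + (S b - a))%nat with (S b) by lia.
  cbn [map fold_right]; rewrite Rplus_0_r.
  induction (map f (seq a (S b - a))) as [|x xs IH]; simpl; [ring|].
  rewrite IH; ring.
Qed.

Lemma sumR_weight_lower_bound (a b : nat) (c : R) (w f : nat -> R) :
  (forall i, (a <= i <= b)%nat -> 0 <= f i /\ c <= w i) ->
  c * sumR a b f <= sumR a b (fun i => w i * f i).
Proof.
  intros Hwf.
  replace (c * sumR a b f) with (c * sumR a b f + 0 * sumR a b f) by ring.
  rewrite <- sumR_lin; apply sumR_le; intros i Hi.
  destruct (Hwf i Hi) as [Hf Hw]; nra.
Qed.

Lemma sumR_nonneg (a b : nat) (f : nat -> R) :
  (forall i, (a <= i <= b)%nat -> 0 <= f i) -> 0 <= sumR a b f.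
Proof.
  intros Hf.
  replace (sumR a b f) with (sumR a b (fun i => 1 * f i))
    by (apply sumR_ext; intros; ring).
  replace 0 with (0 * sumR a b f) by ring.
  apply sumR_weight_lower_bound; intros i Hi; split; [apply Hf, Hi | lra].
Qed.

Lemma sumR_complement_weight (a b : nat) (c : R) (w f : nat -> R) :
  sumR a b (fun i => (c - w i) * f i) = c * sumR a b f - sumR a b (fun i => w i * f i).
Proof.
  transitivity (sumR a b (fun i => c * f i + -1 * (w i * f i))).
  - apply sumR_ext; intros; ring.
  - rewrite sumR_lin; ring.
Qed.

(* For D ≤ 2+r the difference of the two sides equals
   (2+r)·(κ-constraint) + (2+r-D)·(W-2N) + (2+r) mr; for D ≥ 2+r it is
   (2D-2-r)·(κ-constraint) + (D-2-r)·(balance) + 2(D-2)(D-2-r) N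
   + (2+r+r(D-2-r)) mr. *)
Lemma reduced_inequality (r D N M mr W : R) :
  0 <= r -> 0 < D -> 0 <= N -> 0 <= mr ->
  M - W + (3 - D) * N >= 0 ->
  W - 2 * M - r * mr >= 0 ->
  W - 2 * N >= 0 ->
  (2 + r) * (N + M + mr) >= D * (W + r * N).
Proof.
  intros Hr HD HN Hmr Hkappa Hbal HW.
  destruct (Rle_lt_dec D (2 + r)) as [Hsmall | Hlarge].
  - assert (0 <= (2 + r - D) * (W - 2 * N)) by (apply Rmult_le_pos; lra).
    nra.
  - assert (0 <= (D - 2 - r) * (W - 2 * M - r * mr)) by (apply Rmult_le_pos; lra).
    assert (0 <= (2 * D - 2 - r) * (M - W + (3 - D) * N)) by (apply Rmult_le_pos; lra).
    assert (0 <= (D - 2) * (D - 2 - r) * N) by (apply Rmult_le_pos; [nra | lra]).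
    assert (0 <= r * (D - 2 - r) * mr) by (apply Rmult_le_pos; [nra | lra]).
    nra.
Qed.

Theorem mainTheorem7 (l r : nat) (kappa : R) (n m : nat -> R) :
  (2 <= l)%nat -> (3 <= r)%nat ->
  3 - INR l * (1 - kappa) > 0 ->
  (forall s, (2 <= s <= l)%nat -> 0 <= n s) ->
  (forall t, (2 <= t <= r)%nat -> 0 <= m t) ->
  sumR 2 l (fun s => INR s * n s) = sumR 2 r (fun t => INR t * m t) ->
  sumR 2 (r - 1) m + sumR 2 l (fun s => (INR l - INR s) * n s)
    >= kappa * INR l * sumR 2 l n ->
  sumR 2 (r - 1) (fun t => (INR r - INR t) * m t)
    >= (INR r - (2 + INR r) / (3 - INR l * (1 - kappa)))
       * (sumR 2 l n + sumR 2 r m).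
Proof.
  intros Hl Hr HD Hn Hm Hbalance Hkappa.
  set (D := 3 - INR l * (1 - kappa)) in *.
  set (N := sumR 2 l n) in *.
  set (W := sumR 2 l (fun s => INR s * n s)) in *.
  set (M := sumR 2 (r - 1) m).
  set (P := sumR 2 (r - 1) (fun t => INR t * m t)).
  assert (Hr1 : r = S (r - 1)) by lia.
  assert (HmSum : sumR 2 r m = M + m r).
  { rewrite Hr1 at 1; rewrite sumR_last, <- Hr1 by lia; reflexivity. }
  assert (HW : W = P + INR r * m r).
  { rewrite Hbalance, Hr1 at 1; rewrite sumR_last, <- Hr1 by lia; reflexivity. }
  assert (Hidx : forall i, (2 <= i)%nat -> 2 <= INR i)
    by (intros i Hi; apply (le_INR 2) in Hi; simpl in Hi; lra).
  assert (HN2 : 2 * N <= W)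
    by (apply sumR_weight_lower_bound; intros i Hi; split; [apply Hn | apply Hidx]; lia).
  assert (HM2 : 2 * M <= P)
    by (apply sumR_weight_lower_bound; intros i Hi; split; [apply Hm | apply Hidx]; lia).
  assert (HN0 : 0 <= N) by (apply sumR_nonneg; exact Hn).
  assert (Hmr : 0 <= m r) by (apply Hm; lia).
  rewrite sumR_complement_weight in Hkappa.
  assert (HD3 : INR l * (1 - kappa) = 3 - D) by (unfold D; ring).
  assert (Hkappa' : M - W + (3 - D) * N >= 0) by (fold M N W in Hkappa; nra).
  assert (Hred := reduced_inequality (INR r) D N M (m r) W
                    (pos_INR r) HD HN0 Hmr Hkappa' ltac:(lra) ltac:(lra)).
  (* The goal reads rM - P >= (r - q)(N + M + m_r) with q = (2+r)/D; by
     W = P + r m_r it amounts to q (N + M + m_r) >= W + rN, which is the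
     reduced inequality divided by D. *)
  rewrite sumR_complement_weight, HmSum; fold M P.
  set (q := (2 + INR r) / D).
  assert (Hq : q * D = 2 + INR r) by (unfold q; field; lra).
  assert (0 <= q * (N + M + m r) - W - INR r * N).
  { apply (Rmult_le_reg_l D); [lra|]. nra. }
  nra.
Qed.
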